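(* Let $(\Omega,\mu)$ be a $\sigma$-finite measure space, $p_0\ge 1$, and let $f,g$ be measurable functions on $\Omega$ such that there exists $\tau_0\in(0,\infty)$ with $\lambda_f(\tau)\le\lambda_g(\tau)$ for $\tau<\tau_0$ and $\lambda_f(\tau)\ge\lambda_g(\tau)$ for $\tau>\tau_0$. Suppose $f\in L^{p_0}(\Omega)$ and $\|f\|_{p_0}\ge\|g\|_{p_0}$. Then for all $t>0$, \[ \int_0^t g^*(s)^{p_0}\,ds\le\int_0^t f^*(s)^{p_0}\,ds . \]
   Context: For a measurable $f$ on $(\Omega,\mu)$: the distribution function is $\lambda_f(\tau)=\mu\{x:|f(x)|>\tau\}$, $\tau>0$, and the nonincreasing rearrangement is $f^*(s)=\inf\{\tau>0:\lambda_f(\tau)\le s\}$, $s>0$. *)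

From HB Require Import structures.
From mathcomp Require Import all_boot all_order all_algebra.
From mathcomp Require Import all_classical all_reals all_analysis.
Set Implicit Arguments. Unset Strict Implicit. Unset Printing Implicit Defensive.
Import Order.TTheory GRing.Theory Num.Theory.
Local Open Scope classical_set_scope.
Local Open Scope ring_scope.

Definition distfun d (T : measurableType d) (R : realType)
  (mu : {measure set T -> \bar R}) (f : T -> R) (tau : R) : \bar R :=
  mu [set x | tau < `|f x|].

(* nonincreasing rearrangement f^*(s) = inf {tau > 0 : lambda_f(tau) <= s}
   (infimum in the extended reals; inf of the empty set is +oo) *)
Definition rearr d (T : measurableType d) (R : realType)
  (mu : {measure set T -> \bar R}) (f : T -> R) (s : R) : \bar R :=
  ereal_inf [set tau%:E | tau in [set tau : R | 0 < tau /\ (distfun mu f tau <= s%:E)%E]].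

From HB Require Import structures.
From mathcomp Require Import all_boot all_order all_algebra.
From mathcomp Require Import all_classical all_reals all_analysis.
From mathcomp Require Import measurable_realfun.
Import Order.TTheory GRing.Theory Num.Theory.
Local Open Scope classical_set_scope.
Local Open Scope ring_scope.

(* For h measurable and p > 0 put Phi_h(sigma) = lambda_h(sigma^(1/p)), the
   distribution function of |h|^p.  Two layer-cake identities express both
   sides of the theorem through Phi:
     int_Omega |h|^p dmu = int_0^oo Phi_h,
     int_0^t h^*(s)^p ds = int_0^oo min(Phi_h, t),
   the second because h^*(s)^p > sigma iff s < Phi_h(sigma).  The hypotheses
   say that Phi_f <= Phi_g below the crossing point tau0^p, Phi_g <= Phi_f
   beyond it, and int Phi_g <= int Phi_f < oo.  An elementary comparison lemma
   for nonincreasing functions with this single-crossing pattern then gives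
   int min(Phi_g, t) <= int min(Phi_f, t): either Phi_f < t somewhere below
   the crossing, and integrating a + min(b, t) <= min(a, t) + b and cancelling
   int b concludes, or Phi_f >= t there and the inequality holds pointwise. *)

Section truncated_half_lines.
Context {R : realType}.
Local Open Scope ereal_scope.

Lemma measurable_EFin_lt (a : \bar R) : measurable [set x : R | x%:E < a].
Proof.
rewrite -[X in measurable X]setTI.
by apply: emeasurable_fun_infty_o => //; apply/measurable_EFinP.
Qed.

Lemma lebesgue_pos_below (a : \bar R) : 0 <= a ->
  lebesgue_measure ([set x : R | x%:E < a] `&` `]0%R, +oo[) = a.
Proof.
case: a => [r||] // r0.
- rewrite (_ : _ `&` _ = `]0%R, r[%classic); last first.
    apply/seteqP; split => x /=; rewrite !in_itv /= ?andbT lte_fin.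
      by case=> -> ->.
    by case/andP=> -> ->.
  rewrite lebesgue_measure_itv /= lte_fin.
  case: ltP => [r0'|]; first by rewrite sube0.
  by move=> rle; apply/eqP; rewrite eq_le r0 lee_fin rle.
- rewrite (_ : _ `&` _ = `]0%R, +oo[%classic).
    by rewrite lebesgue_measure_itv /= ltry.
  by apply/seteqP; split => x /=; [case|move=> ->; split=> //; rewrite ltry].
Qed.

Lemma lebesgue_trunc_below (t : R) (a : \bar R) : (0 < t)%R -> 0 <= a ->
  lebesgue_measure (`]0%R, t] `&` [set s : R | s%:E < a]) = mine a t%:E.
Proof.
move=> t0 a0; have [a_le|t_lt] := leP a t%:E.
- rewrite -[RHS](lebesgue_pos_below _ a0); congr lebesgue_measure.
  apply/seteqP; split => x /=; rewrite !in_itv /= ?andbT.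
    by case=> /andP[-> _] ->.
  by case=> xa ->; rewrite /= -lee_fin (le_trans (ltW xa) a_le).
- rewrite (_ : _ `&` _ = `]0%R, t]%classic).
    by rewrite lebesgue_measure_itv /= lte_fin t0 sube0.
  apply/seteqP; split => x /=; first by case.
  move=> xt; split => //; apply: le_lt_trans t_lt.
  by move: xt; rewrite in_itv lee_fin => /andP[].
Qed.
End truncated_half_lines.

Section layer_cake.
Context {d} {T : measurableType d} {R : realType} (m : {measure set T -> \bar R}).
Hypothesis m_sigma_finite : sigma_finite setT m.
Let mm : set T -> \bar R := m.
HB.instance Definition _ := Measure.on mm.
HB.instance Definition _ := @Measure_isSigmaFinite.Build _ _ _ mm m_sigma_finite.
Local Open Scope ereal_scope.

(* Layer-cake formula: int u dm = int_0^oo m {u > s} ds, by Tonelli applied to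
   the indicator of {(x, s) | 0 < s < u x}. *)
Lemma layer_cake (u : T -> \bar R) : measurable_fun setT u -> (forall x, 0 <= u x) ->
  \int[m]_x u x =
  \int[lebesgue_measure]_(s in `]0%R, +oo[) m [set x | s%:E < u x].
Proof.
move=> mu_meas u0.
pose A := [set z : T * measurableTypeR R | (0 < z.2)%R /\ (z.2)%:E < u z.1].
have AE x s : ((x, s) \in A) = (0 < s)%R && (s%:E < u x).
  by apply/idP/andP => [/set_mem[]|[? ?]]; [split|exact/mem_set].
have mA : measurable A.
  rewrite (_ : A = ([set: T * measurableTypeR R] `&` [set z | 0 < (z.2)%:E]) `&`
     ([set: T * measurableTypeR R] `&` [set z | (z.2)%:E < u z.1])); last first.
    apply/seteqP; split => z /=.
      by case=> z0 zu; do 2 split => //; rewrite lte_fin.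
    by case=> -[_ z0] [_ zu]; split => //; rewrite -lte_fin.
  apply: measurableI; apply: measurable_lte => //.
  - apply/measurable_EFinP; exact: measurable_snd.
  - apply/measurable_EFinP; exact: measurable_snd.
  - by apply: measurableT_comp; [exact: mu_meas|exact: measurable_fst].
pose F z := (\1_A z : R)%:E.
have mF : measurable_fun setT F by apply/measurable_EFinP; exact: measurable_indic.
have F0 z : 0 <= F z by rewrite lee_fin indicE; case: (_ \in _).
have posE (s : R) : (s \in `]0%R, +oo[%classic) = (0 < s)%R.
  by rewrite mem_setE in_itv /= andbT.
transitivity (\int[mm]_x \int[@lebesgue_measure R]_s F (x, s)).
  apply: eq_integral => x _; have mlt := measurable_EFin_lt (u x).
  rewrite -[LHS](lebesgue_pos_below _ (u0 x)) -integral_indic //.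
  rewrite integral_mkcond; apply: eq_integral => s _.
  by rewrite patchE /F !indicE AE posE; case: (0 < s)%R; rewrite //= mem_setE.
rewrite (@fubini_tonelli _ _ _ _ _ mm (@lebesgue_measure R) F mF F0).
rewrite [RHS]integral_mkcond.
apply: eq_integral => s _; rewrite patchE posE.
have [s0|s0] := ltP 0%R s.
  have mAs : measurable [set x | s%:E < u x].
    by rewrite -[X in measurable X]setTI; exact: emeasurable_fun_o_infty.
  rewrite -(setIT [set x | s%:E < u x]) -integral_indic //.
  by apply: eq_integral => x _; rewrite /F !indicE AE s0 mem_setE.
by rewrite integral0_eq // => x _; rewrite /F indicE AE ltNge s0.
Qed.
End layer_cake.

Section nonincreasing_measurable.
Context {R : realType}.
Local Open Scope ereal_scope.

(* A nonincreasing extended-real function on an interval is measurable: its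
   superlevel sets are intervals. *)
Lemma nonincreasing_emeasurable (D : set R) (u : R -> \bar R) : is_interval D ->
  {in D &, forall a b, (a <= b)%R -> u b <= u a} -> measurable_fun D u.
Proof.
move=> iD ni.
apply: (measurability (@ErealGenOInfty.G R)) => [|/= _ [_] [r] -> <-].
  exact: ErealGenOInfty.measurableE.
apply: is_interval_measurable => a b [Da ua] [Db ub] y /andP[ay yb].
have Dy : D y by apply: (iD a b) => //; rewrite ay yb.
split => //; move: ub; rewrite /= !in_itv /= !andbT => ub.
by apply: lt_le_trans ub _; apply: ni; rewrite ?inE.
Qed.
End nonincreasing_measurable.

Section distribution_function.
Context {d} {T : measurableType d} {R : realType} (mu : {measure set T -> \bar R}).
Context {h : T -> R} (mh : measurable_fun setT h).
Local Open Scope ereal_scope.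

Lemma measurable_superlevel (tau : R) : measurable [set x | (tau < `|h x|)%R].
Proof.
have mn : measurable_fun setT (fun x => `|h x|%R) :=
  measurableT_comp (@normr_measurable R setT) mh.
rewrite (_ : [set x | _] = setT `&` (fun x => `|h x|%R) @^-1` `]tau, +oo[).
  by apply: mn => //; exact: measurable_itv.
by apply/seteqP; split => x /=; rewrite in_itv /= andbT //; case.
Qed.

Lemma distfun_nonincreasing {t1 t2 : R} : (t1 <= t2)%R ->
  distfun mu h t2 <= distfun mu h t1.
Proof.
move=> t12; apply: le_measure; rewrite ?inE; try exact: measurable_superlevel.
by move=> x /=; apply: le_lt_trans.
Qed.

(* Right continuity of lambda_h, in the form needed below: anything strictly
   below lambda_h(tau) is already below lambda_h(tau + 1/(n+1)) for some n. *)
Lemma distfun_right_continuous (tau : R) (s : \bar R) : s < distfun mu h tau ->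
  exists n : nat, s < distfun mu h (tau + n.+1%:R^-1).
Proof.
move=> sl; apply/not_existsP => H.
pose F n := [set x | (tau + n.+1%:R^-1 < `|h x|)%R].
have FU : \bigcup_n F n = [set x | (tau < `|h x|)%R].
  apply/seteqP; split => x /=.
    by move=> [n _ /=]; apply: le_lt_trans; rewrite lerDl invr_ge0.
  by move=> /ltr_add_invr [k hk]; exists k.
have ndF : nondecreasing_seq F.
  move=> n k nk; apply/subsetPset => x /=; apply: le_lt_trans.
  by rewrite lerD2l lef_pV2 ?posrE // ler_nat.
have mF n : measurable (F n) by exact: measurable_superlevel.
have mUF : measurable (\bigcup_n F n) by rewrite FU; exact: measurable_superlevel.
have cvF := nondecreasing_cvg_mu (mu := mu) mF mUF ndF.
have : mu (\bigcup_n F n) <= s.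
  rewrite -(cvg_lim _ cvF) //; apply: lime_le.
    by apply/cvg_ex; eexists; exact: cvF.
  by apply: nearW => n; rewrite leNgt; apply/negP; exact: H n.
by rewrite FU leNgt sl.
Qed.

Lemma rearr_ge0 (s : R) : 0 <= rearr mu h s.
Proof. by apply: le_ereal_inf_tmp => _ [tau [t0 _] <-]; rewrite lee_fin ltW. Qed.

Lemma rearr_nonincreasing (s1 s2 : R) : (s1 <= s2)%R -> rearr mu h s2 <= rearr mu h s1.
Proof.
move=> s12; apply: ereal_inf_le_tmp => _ [tau [t0 ts] <-].
by exists tau => //; split => //; apply: le_trans ts _; rewrite lee_fin.
Qed.

Lemma rearr_gtE (tau s : R) : (0 < tau)%R ->
  (tau%:E < rearr mu h s) = (s%:E < distfun mu h tau).
Proof.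
move=> t0; apply/idP/idP.
  apply: contraTT; rewrite -!leNgt => ls.
  by apply: ereal_inf_lbound; exists tau.
move=> /distfun_right_continuous [n hn].
apply: (@lt_le_trans _ _ (tau + n.+1%:R^-1)%:E).
  by rewrite lte_fin ltrDl invr_gt0.
apply: le_ereal_inf_tmp => _ [sg [sg0 sgs] <-].
rewrite lee_fin leNgt; apply/negP => hlt.
have := distfun_nonincreasing (ltW hlt); rewrite leNgt => /negP; apply.
exact: le_lt_trans sgs hn.
Qed.

End distribution_function.

(* If lambda_g <= lambda_f beyond tau0, then also at tau0, by right continuity
   of lambda_g. *)
Lemma distfun_le_from_crossing {d} {T : measurableType d} {R : realType}
    (mu : {measure set T -> \bar R}) {f g : T -> R} {tau0 : R} :
  measurable_fun setT f -> measurable_fun setT g ->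
  (forall tau, tau0 < tau -> (distfun mu g tau <= distfun mu f tau)%E) ->
  forall tau, tau0 <= tau -> (distfun mu g tau <= distfun mu f tau)%E.
Proof.
move=> mf mg gf tau; rewrite le_eqVlt => /predU1P[<-|]; last exact: gf.
rewrite leNgt; apply/negP => /(distfun_right_continuous mu mg) [n hn].
have tau0_lt : tau0 < tau0 + n.+1%:R^-1 by rewrite ltrDl invr_gt0.
have := lt_le_trans hn (gf _ tau0_lt).
by rewrite ltNge (distfun_nonincreasing mu mf (ltW tau0_lt)).
Qed.

Section power_and_min_facts.
Context {R : realType}.
Local Open Scope ereal_scope.

Lemma lt_poweR_root (sg p : R) (a : \bar R) : (0 < sg)%R -> (0 < p)%R -> 0 <= a ->
  (sg%:E < a `^ p) = ((sg `^ p^-1)%R%:E < a).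
Proof.
move=> s0 p0; case: a => [r||] // a0.
- rewrite poweR_EFin !lte_fin.
  have rootK : ((sg `^ p^-1) `^ p = sg)%R.
    by rewrite -powRrM mulVf ?gt_eqF // powRr1 ?ltW.
  have q0 : (sg `^ p^-1)%R \in Num.nneg by rewrite nnegrE powR_ge0.
  have r0 : r \in Num.nneg by rewrite nnegrE -lee_fin.
  rewrite -[X in (X < _)%R]rootK; apply/idP/idP.
    apply: contraTT; rewrite -!leNgt => rq.
    exact: (ge0_ler_powR (ltW p0) r0 q0 rq).
  by move=> qr; exact: (gt0_ltr_powR p0 q0 r0 qr).
- by rewrite poweRyr ?gt_eqF // !ltry.
Qed.

Lemma adde_min_exchange (a b t : \bar R) : 0 <= a -> 0 <= b ->
  a <= b \/ a <= t -> a + mine b t <= mine a t + b.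
Proof.
move=> a0 b0 ab_at; have [a_le|t_lt] := leP a t.
  by apply: leeD => //; rewrite ge_min lexx.
have ab : a <= b by case: ab_at => // /(lt_le_trans t_lt); rewrite ltxx.
by rewrite addeC; apply: leeD => //; rewrite ge_min lexx orbT.
Qed.

End power_and_min_facts.

Section truncated_comparison.
Context {R : realType} (D : set R) (P : R -> Prop) (a b : R -> \bar R).
Local Open Scope ereal_scope.
Hypothesis D_interval : is_interval D.
Hypotheses (a_ge0 : forall x, 0 <= a x) (b_ge0 : forall x, 0 <= b x).
Hypothesis a_nonincreasing : {in D &, forall x y, (x <= y)%R -> a y <= a x}.
Hypothesis b_nonincreasing : {in D &, forall x y, (x <= y)%R -> b y <= b x}.
Hypothesis P_downward : forall x y, D x -> D y -> (x <= y)%R -> P y -> P x.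
Hypothesis a_le_b : forall x, D x -> P x -> a x <= b x.
Hypothesis b_le_a : forall x, D x -> ~ P x -> b x <= a x.
Hypothesis int_b_le_a :
  \int[lebesgue_measure]_(x in D) b x <= \int[lebesgue_measure]_(x in D) a x.
Hypothesis int_a_fin : \int[lebesgue_measure]_(x in D) a x < +oo.

Let mD : measurable D := is_interval_measurable D_interval.

Let min_measurable (u : R -> \bar R) (t : R) :
  {in D &, forall x y, (x <= y)%R -> u y <= u x} ->
  measurable_fun D (fun x => mine (u x) t%:E).
Proof.
move=> u_ni; apply: nonincreasing_emeasurable => // x y xD yD xy.
by apply: le_min2 => //; exact: u_ni.
Qed.

Lemma truncated_integral_le (t : R) : (0 <= t)%R ->
  \int[lebesgue_measure]_(x in D) mine (b x) t%:E <=
  \int[lebesgue_measure]_(x in D) mine (a x) t%:E.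
Proof.
move=> t0.
have ta_ge0 x : 0 <= mine (a x) t%:E by rewrite le_min a_ge0 lee_fin t0.
have tb_ge0 x : 0 <= mine (b x) t%:E by rewrite le_min b_ge0 lee_fin t0.
have ma := nonincreasing_emeasurable D a D_interval a_nonincreasing.
have mb := nonincreasing_emeasurable D b D_interval b_nonincreasing.
have mta := min_measurable a t a_nonincreasing.
have mtb := min_measurable b t b_nonincreasing.
have [[x0 [Dx0 Px0 ax0]]|a_ge_t] := pselect (exists x, [/\ D x, P x & a x < t%:E]).
- have exchange y : D y -> a y + mine (b y) t%:E <= mine (a y) t%:E + b y.
    move=> Dy; apply: adde_min_exchange => //.
    have [Py|nPy] := pselect (P y); [left; exact: a_le_b|right].
    have x0y : (x0 <= y)%R.
      rewrite leNgt; apply/negP => yx0; apply: nPy.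
      exact: P_downward Dy Dx0 (ltW yx0) Px0.
    exact: le_trans (a_nonincreasing _ _ (mem_set Dx0) (mem_set Dy) x0y) (ltW ax0).
  have int_exchange :
      \int[lebesgue_measure]_(x in D) (a x + mine (b x) t%:E) <=
      \int[lebesgue_measure]_(x in D) (mine (a x) t%:E + b x).
    apply: ge0_le_integral => //.
    - by move=> y _; exact: adde_ge0.
    - exact: emeasurable_funD.
    - exact: emeasurable_funD.
  rewrite !ge0_integralD // in int_exchange.
  have Ib_fin : \int[lebesgue_measure]_(x in D) b x \is a fin_num.
    by rewrite ge0_fin_numE ?(le_lt_trans int_b_le_a) // integral_ge0.
  rewrite -(leeD2lE _ _ Ib_fin) [leRHS]addeC.
  exact: le_trans (leeD int_b_le_a (lexx _)) int_exchange.
- apply: ge0_le_integral => // y Dy.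
  have [Py|nPy] := pselect (P y); last by apply: le_min2 => //; exact: b_le_a.
  have t_le_ay : t%:E <= a y.
    by rewrite leNgt; apply/negP => ay; apply: a_ge_t; exists y.
  by rewrite (min_r t_le_ay) ge_min lexx orbT.
Qed.

End truncated_comparison.

Lemma ler_powR_root {R : realType} (p x y : R) : 0 < p -> 0 <= x -> x <= y ->
  x `^ p^-1 <= y `^ p^-1.
Proof.
move=> p0 x0 xy.
by apply: ge0_ler_powR; rewrite ?nnegrE ?invr_ge0 ?(ltW p0) ?(le_trans x0 xy).
Qed.

(* distpow mu p h sigma = mu {|h|^p > sigma} = lambda_h(sigma^(1/p)), the
   distribution function of |h|^p. *)
Definition distpow {d} {T : measurableType d} {R : realType}
    (mu : {measure set T -> \bar R}) (p : R) (h : T -> R) (sg : R) : \bar R :=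
  distfun mu h (sg `^ p^-1).

Section power_distribution.
Context {d} {T : measurableType d} {R : realType} (mu : {measure set T -> \bar R}).
Context {p : R} (p_gt0 : 0 < p) {h : T -> R} (mh : measurable_fun setT h).
Local Open Scope ereal_scope.

Lemma distpow_nonincreasing : {in `]0%R, +oo[%classic &, forall x y, (x <= y)%R ->
  distpow mu p h y <= distpow mu p h x}.
Proof.
move=> x y; rewrite !mem_setE !in_itv /= !andbT => x0 _ xy.
by apply: distfun_nonincreasing => //; apply: ler_powR_root => //; exact: ltW.
Qed.

Lemma integral_powR_distpow : sigma_finite setT mu ->
  \int[mu]_x (`|(EFin \o h) x| `^ p) =
  \int[lebesgue_measure]_(sg in `]0%R, +oo[) distpow mu p h sg.
Proof.
move=> mu_sf; rewrite (layer_cake _ mu_sf).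
- apply: eq_integral => sg; rewrite inE /= in_itv /= andbT => sg0.
  rewrite /distpow /distfun; congr (mu _); apply/funext => x /=.
  by rewrite -poweR_EFin lt_poweR_root ?lee_fin // lte_fin.
- apply: (@measurableT_comp _ _ _ _ _ _ (poweR ^~ p)); first exact: measurable_poweR.
  apply: (@measurableT_comp _ _ _ _ _ _ abse); first exact: abse_measurable.
  exact/measurable_EFinP.
- by move=> x; exact: poweR_ge0.
Qed.

(* Layer-cake form of the truncated integral of the p-th power of h^*, using
   that h^*(s)^p > sigma iff s < lambda_h(sigma^(1/p)). *)
Lemma integral_rearr_distpow (t : R) : (0 < t)%R ->
  \int[lebesgue_measure]_(s in `]0%R, t]) (rearr mu h s `^ p) =
  \int[lebesgue_measure]_(sg in `]0%R, +oo[) mine (distpow mu p h sg) t%:E.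
Proof.
move=> t0; rewrite integral_mkcond (layer_cake _ (sigma_finiteT lebesgue_measure)).
- apply: eq_integral => sg; rewrite inE /= in_itv /= andbT => sg0.
  rewrite -lebesgue_trunc_below //; congr lebesgue_measure.
  apply/seteqP; split => s /=; rewrite patchE.
    case: ifPn => sD; last by rewrite lte_fin ltNge (ltW sg0).
    rewrite lt_poweR_root ?rearr_ge0 // rearr_gtE //; last exact: powR_gt0.
    by move=> H; split => //; exact: set_mem.
  case=> sD; rewrite mem_set // lt_poweR_root ?rearr_ge0 //.
  by rewrite rearr_gtE //; exact: powR_gt0.
- have mD : measurable (`]0%R, t]%classic : set (measurableTypeR R)).
    exact: measurable_itv.
  apply/(measurable_restrictT _ mD).
  apply: (@measurableT_comp _ _ _ _ _ _ (poweR ^~ p)); first exact: measurable_poweR.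
  apply: nonincreasing_emeasurable; first exact: interval_is_interval.
  by move=> a b _ _ ab; exact: rearr_nonincreasing.
- move=> s; rewrite patchE; case: ifPn => _; [exact: poweR_ge0|exact: lexx].
Qed.

End power_distribution.

(* With Phi_h = distpow mu p0 h, both sides become truncated integrals of Phi_g
   and Phi_f, whose crossing at tau0^p0 is encoded by the downward closed
   predicate sigma^(1/p0) < tau0. *)
Theorem mainTheorem3 (d : measure_display) (T : measurableType d) (R : realType)
  (mu : {measure set T -> \bar R}) (p0 : R) (f g : T -> R) (tau0 : R) :
  sigma_finite setT mu ->
  1 <= p0 ->
  measurable_fun setT f -> measurable_fun setT g ->
  0 < tau0 ->
  (forall tau, 0 < tau -> tau < tau0 -> (distfun mu f tau <= distfun mu g tau)%E) ->
  (forall tau, tau0 < tau -> (distfun mu g tau <= distfun mu f tau)%E) ->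
  (Lnorm mu p0%:E (EFin \o f) < +oo)%E ->
  (Lnorm mu p0%:E (EFin \o g) <= Lnorm mu p0%:E (EFin \o f))%E ->
  forall t : R, 0 < t ->
    (\int[lebesgue_measure]_(s in `]0%R, t]%classic) (rearr mu g s `^ p0)
      <= \int[lebesgue_measure]_(s in `]0%R, t]%classic) (rearr mu f s `^ p0))%E.
Proof.
move=> mu_sf p0_ge1 mf mg _ f_le_g g_le_f f_fin norm_le t t_gt0.
have p0_gt0 : 0 < p0 := lt_le_trans ltr01 p0_ge1.
have p0_neq0 : p0 != 0 := lt0r_neq0 p0_gt0.
have int_le : (\int[mu]_x (`|(EFin \o g) x| `^ p0) <=
               \int[mu]_x (`|(EFin \o f) x| `^ p0))%E.
  rewrite -!powR_Lnorm //; apply: gt0_ler_poweR => //.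
  - exact: ltW.
  - by rewrite in_itv /= Lnorm_ge0 leey.
  - by rewrite in_itv /= Lnorm_ge0 leey.
have int_fin : (\int[mu]_x (`|(EFin \o f) x| `^ p0) < +oo)%E.
  by rewrite -powR_Lnorm //; exact: poweR_lty.
rewrite !(integral_powR_distpow _ p0_gt0) // in int_le int_fin.
rewrite !(integral_rearr_distpow _ p0_gt0) //.
apply: (@truncated_integral_le _ _ (fun sg => sg `^ p0^-1 < tau0)) (ltW t_gt0) => //.
- exact: interval_is_interval.
- exact: distpow_nonincreasing.
- exact: distpow_nonincreasing.
- move=> x y; rewrite /= !in_itv /= !andbT => x_gt0 _ xy.
  by apply: le_lt_trans; apply: ler_powR_root => //; exact: ltW.
- by move=> sg; rewrite /= in_itv /= andbT => sg_gt0; apply: f_le_g; exact: powR_gt0.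
- move=> sg _ /negP; rewrite -leNgt => tau0_le.
  exact: (distfun_le_from_crossing mu mf mg g_le_f).
Qed.
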